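(* Let $\Delta=0$ be a passive orthonomic system as described in the context. Define the intrinsic multi-differential operators $\mathfrak{D}_K:\mathcal{B}\to\mathcal{B}$ by $\mathfrak{D}_KP=\widetilde{D_KP}$ for $P\in\mathcal{B}$, $K\in\mathbb{N}^p$. Then for all $K,L\in\mathbb{N}^p$, $\mathfrak{D}_K\mathfrak{D}_L=\mathfrak{D}_{K+L}$.
   Context: Jet space: coordinates $x_1,\dots,x_p$, $u^1,\dots,u^q$ and derivatives $u^j_K$, $K\in\mathbb{N}^p$ a multi-index. $\mathcal{A}$ is the ring of smooth functions of finitely many of these coordinates. Total derivatives $D_i=\partial/\partial x_i+\sum_{j,K}u^j_{K+e_i}\,\partial/\partial u^j_K$ ($e_i$ the $i$-th unit multi-index), $D_K=D_1^{K_1}\cdots D_p^{K_p}$. Choose $n$ pairs $(i^\alpha,J^\alpha)\in\{1,\dots,q\}\times\mathbb{N}^p$, $J^\alpha\neq0$. $u^j_K$ is principal if $(j,K)=(i^\alpha,J^\alpha+L)$ for some $\alpha,L$, otherwise parametric; $\mathcal{B}\subset\mathcal{A}$ consists of functions of the $x_i$ and parametric derivatives only. Fix a ranking $\le$: a total order on $\{1,\dots,q\}\times\mathbb{N}^p$ with $(j,K)\le(j,K+L)$ and $(i,J)\le(j,K)\iff(i,J+L)\le(j,K+L)$. The system is $u^{i^\alpha}_{J^\alpha}=P^\alpha$, $P^\alpha\in\mathcal{B}$, written $\Delta=0$ with $\Delta^\alpha=u^{i^\alpha}_{J^\alpha}-P^\alpha$; it is passive orthonomic if (i) $P^\alpha$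 depends only on $u^j_K$ with $(j,K)<(i^\alpha,J^\alpha)$, and (ii) $(i^\alpha,J^\alpha+K)=(i^\beta,J^\beta+L)$ implies $D_KP^\alpha=D_LP^\beta$ (modulo the system). For such systems every $Q\in\mathcal{A}$ has a unique reduced form $\widetilde{Q}\in\mathcal{B}$ with $\widetilde{Q}\equiv Q$ modulo the differential ideal generated by the $\Delta^\alpha$ (obtained by repeatedly substituting $u^{i^\alpha}_{J^\alpha+L}\mapsto D_LP^\alpha$ for the highest principal derivative). *)

From HB Require Import structures.
From mathcomp Require Import all_boot all_order all_algebra.
From mathcomp Require Import boolp classical_sets reals topology normedtype derive.
From mathcomp Require Import matrix_topology matrix_normedtype.
Import numFieldNormedType.Exports.
Set Implicit Arguments. Unset Strict Implicit. Unset Printing Implicit Defensive.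
Import Order.TTheory GRing.Theory Num.Theory.
Local Open Scope ring_scope.

Notation mindex p := {ffun 'I_p -> nat}.
Definition madd p (K L : mindex p) : mindex p := [ffun t => (K t + L t)%N].
Definition munit p (i : 'I_p) : mindex p := [ffun t => nat_of_bool (t == i)].

(* Jet coordinates: inl i = x_i ; inr (j, K) = u^j_K. *)
Notation coord p q := ('I_p + ('I_q * mindex p))%type.

Section Jet.
Variables (R : realType) (p q : nat).

Definition jet := coord p q -> R.

Fixpoint Ck (m k : nat) (f : 'rV[R]_m -> R) : Prop :=
  match k with
  | 0 => continuous f
  | k'.+1 => (forall x, differentiable f x) /\
             forall i : 'I_m, Ck k' ('D_(delta_mx 0 i) f)
  end.
Definition smooth m (f : 'rV[R]_m -> R) := forall k, Ck k f.

Definition restrict (S : seq (coord p q)) (z : jet) : 'rV[R]_(size S) :=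
  \row_(k < size S) z (tnth (in_tuple S) k).

Definition smooth_on (S : seq (coord p q)) (F : jet -> R) :=
  exists G : 'rV[R]_(size S) -> R, smooth G /\ forall z, F z = G (restrict S z).

Definition inA (F : jet -> R) := exists S, smooth_on S F.

Definition depends_on (S : seq (coord p q)) (F : jet -> R) :=
  forall z w : jet, (forall c, c \in S -> z c = w c) -> F z = F w.

Definition supp (F : jet -> R) : seq (coord p q) :=
  match pselect (exists S, depends_on S F) with
  | left h => projT1 (cid h)
  | right _ => [::]
  end.

Definition shift_coord (z : jet) (c : coord p q) (t : R) : jet :=
  fun d => if d == c then z d + t else z d.

Definition partial (c : coord p q) (F : jet -> R) (z : jet) : R :=
  derive1 (fun t : R => F (shift_coord z c t)) 0.

(* total derivative D_i = d/dx_i + sum_{j,K} u^j_{K+e_i} d/du^j_K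
   (finite sum, over the coordinates F depends on) *)
Definition Dtot (i : 'I_p) (F : jet -> R) : jet -> R := fun z =>
  partial (inl i) F z +
  \sum_(c <- undup (supp F))
     match c with
     | inl _ => 0
     | inr jK => z (inr (jK.1, madd jK.2 (munit i))) * partial c F z
     end.

Definition DK (K : mindex p) (F : jet -> R) : jet -> R :=
  foldr (fun i G => iter (K i) (Dtot i) G) F (enum 'I_p).

Section System.
Variables (n : nat) (ia : 'I_n -> 'I_q) (Ja : 'I_n -> mindex p)
          (P : 'I_n -> jet -> R).

Definition principal (c : coord p q) : bool :=
  match c with
  | inl _ => false
  | inr jK => [exists a, (ia a == jK.1) && [forall t, Ja a t <= jK.2 t]%N]
  end.

Definition inB (F : jet -> R) :=
  exists S, (forall c, c \in S -> ~~ principal c) /\ smooth_on S F.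

Definition Delta (a : 'I_n) : jet -> R :=
  fun z => z (inr (ia a, Ja a)) - P a z.

Definition in_ideal (Q : jet -> R) :=
  exists (m : nat) (c : 'I_m -> jet -> R) (al : 'I_m -> 'I_n) (L : 'I_m -> mindex p),
    (forall k, inA (c k)) /\
    forall z, Q z = \sum_(k < m) c k z * DK (L k) (Delta (al k)) z.

Definition reduced_form (Q Rf : jet -> R) :=
  inB Rf /\ in_ideal (fun z => Q z - Rf z).

Definition unique_reduced_forms :=
  forall Q, inA Q -> exists Rf, reduced_form Q Rf /\
     forall Rf', reduced_form Q Rf' -> Rf' = Rf.

Definition is_ranking (rk : rel ('I_q * mindex p)) :=
  [/\ reflexive rk, antisymmetric rk, transitive rk & total rk] /\
  (forall j K L, rk (j, K) (j, madd K L)) /\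
  (forall i J j K L, rk (i, J) (j, K) = rk (i, madd J L) (j, madd K L)).

Definition passive_orthonomic (rk : rel ('I_q * mindex p)) :=
  [/\ (forall a, Ja a != 0),
      is_ranking rk,
      (forall a, exists S,
          (forall c, c \in S -> ~~ principal c /\
             match c with
             | inl _ => True
             | inr jK => rk jK (ia a, Ja a) /\ jK != (ia a, Ja a)
             end) /\ smooth_on S (P a)) &
      (* (ii) integrability conditions, modulo the system *)
      (forall a b K L, (ia a, madd (Ja a) K) = (ia b, madd (Ja b) L) ->
          in_ideal (fun z => DK K (P a) z - DK L (P b) z))].
End System.
End Jet.

(* The reduction Q |-> Q~ is the identity modulo the differential ideal I generated by the
   Delta^a, and I is stable under every total derivative D_i (Leibniz rule, and
   D_i (D_L Delta^a) = D_(L+e_i) Delta^a).  Hence D_K (D_L F - frakD_L F) lies in I, so that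
   D_K (frakD_L F) = D_K D_L F = D_(K+L) F modulo I, and uniqueness of reduced forms gives
   frakD_K (frakD_L F) = frakD_(K+L) F.  The identity D_K D_L = D_(K+L) is the commutativity of
   the total derivatives: writing D_i = sum_c a_i(c) d/dc with a_i(x_k) = delta_ik and
   a_i(u^j_K) = u^j_(K+e_i), the second-order part of D_i D_j F is symmetric in i, j by Schwarz's
   theorem, and the first-order part because u^l_(K+e_j+e_i) = u^l_(K+e_i+e_j). *)

From HB Require Import structures.
From mathcomp Require Import all_boot all_order all_algebra.
From mathcomp Require Import boolp classical_sets functions reals topology normedtype derive.
From mathcomp Require Import matrix_topology matrix_normedtype.
From mathcomp Require Import lra ring.
Import numFieldNormedType.Exports.
Set Implicit Arguments. Unset Strict Implicit. Unset Printing Implicit Defensive.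
Import Order.TTheory GRing.Theory Num.Theory.
Local Open Scope ring_scope.

Section SmoothFunctions.
Variable R : realType.
Implicit Types (m k : nat).

Lemma eq_Ck m k (f g : 'rV[R]_m -> R) : f =1 g -> Ck k f -> Ck k g.
Proof. by move=> /funext ->. Qed.

Lemma CkW m k (f : 'rV[R]_m -> R) : Ck k.+1 f -> Ck k f.
Proof.
elim: k f => [|k IH] f [df Hf] /=; first by move=> x; apply: differentiable_continuous.
by split=> // i; apply: IH; apply: Hf.
Qed.

Lemma derive_sum_delta m (f : 'rV[R]_m -> R) x v : differentiable f x ->
  'D_v f x = \sum_i v 0 i * 'D_('e_i) f x.
Proof.
move=> df; rewrite deriveE //.
under eq_bigr => i _ do rewrite deriveE //.
by rewrite {1}(row_sum_delta v) linear_sum; apply: eq_bigr => i _; rewrite linearZ.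
Qed.

Lemma Ck_cst m k (c : R) : Ck k (fun _ : 'rV[R]_m => c).
Proof.
elim: k c => [|k IH] c /=; first exact: cst_continuous.
split=> [x|i]; first exact: differentiable_cst.
by apply: eq_Ck (IH 0) => x; rewrite derive_cst.
Qed.

Lemma CkD m k (f g : 'rV[R]_m -> R) : Ck k f -> Ck k g -> Ck k (fun x => f x + g x).
Proof.
elim: k f g => [|k IH] f g /=; first by move=> cf cg x; exact: (continuousD (cf x) (cg x)).
move=> [df Hf] [dg Hg]; split=> [x|i]; first exact: differentiableD.
apply: eq_Ck (IH _ _ (Hf i) (Hg i)) => x.
by rewrite deriveD //; apply: diff_derivable.
Qed.

Lemma CkM m k (f g : 'rV[R]_m -> R) : Ck k f -> Ck k g -> Ck k (fun x => f x * g x).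
Proof.
elim: k f g => [|k IH] f g /=; first by move=> cf cg x; exact: (continuousM (cf x) (cg x)).
move=> [df Hf] [dg Hg]; split=> [x|i]; first exact: differentiableM.
have Cf : Ck k f by apply: CkW.
have Cg : Ck k g by apply: CkW.
apply: eq_Ck (CkD (IH _ _ Cf (Hg i)) (IH _ _ Cg (Hf i))) => x.
by rewrite deriveM //; apply: diff_derivable.
Qed.

Lemma Ck_sum m k (I : Type) (s : seq I) (f : I -> 'rV[R]_m -> R) :
  (forall i, Ck k (f i)) -> Ck k (fun x => \sum_(i <- s) f i x).
Proof.
move=> Hf; elim: s => [|a s IH].
  by apply: eq_Ck (Ck_cst _ _ 0) => x; rewrite big_nil.
by apply: eq_Ck (CkD (Hf a) IH) => x; rewrite big_cons.
Qed.

Lemma Ck_derive m k (f : 'rV[R]_m -> R) v : Ck k.+1 f -> Ck k ('D_v f).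
Proof.
move=> [df Hf]; apply: eq_Ck (Ck_sum _ (fun i => CkM (Ck_cst _ _ (v 0 i)) (Hf i))) => x.
by rewrite derive_sum_delta.
Qed.

Definition row_coord m (j : 'I_m) (x : 'rV[R]_m) : R := x 0 j.

Lemma row_coord_linear m j : linear (@row_coord m j).
Proof. by move=> a u v; rewrite /row_coord !mxE. Qed.

HB.instance Definition _ m j :=
  GRing.isLinear.Build R 'rV[R]_m R _ (@row_coord m j) (@row_coord_linear m j).

Lemma row_coord_differentiable m j x : differentiable (@row_coord m j) x.
Proof. exact/linear_differentiable/coord_continuous. Qed.

Lemma derive_row_coord m j x v : 'D_v (@row_coord m j) x = v 0 j.
Proof.
by rewrite deriveE ?diff_lin //; [apply: coord_continuous | apply: row_coord_differentiable].
Qed.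

Lemma Ck_row_coord m k (j : 'I_m) : Ck k (@row_coord m j).
Proof.
case: k => [|k] /=; first exact: coord_continuous.
split=> [x|i]; first exact: row_coord_differentiable.
by apply: eq_Ck (Ck_cst _ _ ('e_i 0 j)) => x; rewrite derive_row_coord.
Qed.

Lemma colsub_continuous m m' (f : 'I_m' -> 'I_m) :
  continuous (colsub f : 'rV[R]_m -> 'rV[R]_m').
Proof.
move=> u A /nbhs_ballP[e /= e0 eA]; apply/nbhs_ballP; exists e => //= v [_ uv].
by apply: eA; split=> // i j; rewrite !mxE; apply: uv.
Qed.

Lemma colsub_differentiable m m' (f : 'I_m' -> 'I_m) (x : 'rV[R]_m) :
  differentiable (colsub f : 'rV[R]_m -> 'rV[R]_m') x.
Proof. exact/linear_differentiable/colsub_continuous. Qed.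

Lemma derive_colsub m m' (f : 'I_m' -> 'I_m) (g : 'rV[R]_m' -> R) x v :
  'D_v (g \o colsub f) x = 'D_(colsub f v) g (colsub f x).
Proof.
rewrite /derive; set d := (fun _ : R => _); set d' := (fun _ : R => _).
suff -> : d = d' by [].
apply: funext => h; rewrite /d /d' /=.
by congr (_ *: (g _ - _)); apply/rowP => i; rewrite !mxE.
Qed.

Lemma Ck_colsub m m' k (f : 'I_m' -> 'I_m) (g : 'rV[R]_m' -> R) :
  Ck k g -> Ck k (g \o colsub f).
Proof.
elim: k g => [|k IH] g /=.
  by move=> cg x; apply: continuous_comp; [exact: colsub_continuous | exact: cg].
move=> [dg Hg]; split=> [x|i].
  exact: differentiable_comp (colsub_differentiable f x) (dg _).
apply: eq_Ck (IH _ (Ck_derive (colsub f 'e_i) (conj dg Hg))) => x /=.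
by rewrite derive_colsub.
Qed.

Lemma smooth_derive m (f : 'rV[R]_m -> R) v : smooth f -> smooth ('D_v f).
Proof. by move=> sf k; apply: Ck_derive. Qed.

Lemma smooth_differentiable m (f : 'rV[R]_m -> R) x : smooth f -> differentiable f x.
Proof. by move=> /(_ 1%N) [df _]. Qed.

Lemma smooth_continuous m (f : 'rV[R]_m -> R) : smooth f -> continuous f.
Proof. by move=> /(_ 0%N). Qed.

End SmoothFunctions.

Section Schwarz.
Variable R : realType.
Implicit Types (m : nat).

Lemma line_quotientE m (G : 'rV[R]_m -> R) u c s :
  (fun h : R => h^-1 *: (((fun s => G (s *: u + c)) \o shift s) (h *: 1) - G (s *: u + c))) =
  (fun h : R => h^-1 *: ((G \o shift (s *: u + c)) (h *: u) - G (s *: u + c))).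
Proof.
apply: funext => h /=; congr (_ *: (G _ - _)).
by rewrite /shift /= scalerDl addrA [h *: 1]mulr1.
Qed.

Lemma derive_line m (G : 'rV[R]_m -> R) u c (s : R) :
  'D_1 (fun s : R => G (s *: u + c)) s = 'D_u G (s *: u + c).
Proof. by rewrite /derive line_quotientE. Qed.

Lemma is_derive_line m (G : 'rV[R]_m -> R) u c (s : R) :
  differentiable G (s *: u + c) ->
  is_derive s 1 (fun s : R => G (s *: u + c)) ('D_u G (s *: u + c)).
Proof.
move=> dG; split; last exact: derive_line.
by rewrite /derivable line_quotientE; apply: (diff_derivable (v := u) dG).
Qed.

Lemma MVT0 (f df : R -> R) (h : R) :
  0 <= h -> (forall s : R, is_derive s (1 : R) f (df s)) ->
  exists2 c, 0 <= c <= h & f h - f 0 = df c * h.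
Proof.
move=> h0 f'.
have cf : continuous f.
  move=> x; apply: differentiable_continuous; apply/derivable1_diffP.
  exact: (@ex_derive _ _ _ _ _ _ _ (f' x)).
have [c c0h ->] := MVT_segment h0 (fun x _ => f' x) (continuous_subspaceT cf).
by exists c; [move: c0h; rewrite in_itv | rewrite subr0].
Qed.

Lemma second_difference_mixed m (G : 'rV[R]_m -> R) u v a h : 0 <= h ->
  (forall x, differentiable G x) -> (forall x, differentiable ('D_u G) x) ->
  exists s t, [/\ 0 <= s <= h, 0 <= t <= h &
    G (h *: u + h *: v + a) - G (h *: u + a) - G (h *: v + a) + G a =
    h * h * 'D_v ('D_u G) (s *: u + t *: v + a)].
Proof.
move=> h0 dG dDG.
pose psi s := G (s *: u + (h *: v + a)) - G (s *: u + a).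
have psi' (s : R) :
    is_derive s (1 : R) psi ('D_u G (s *: u + (h *: v + a)) - 'D_u G (s *: u + a)).
  by apply: is_deriveB; apply: is_derive_line.
have [s s0h Es] := MVT0 h0 psi'.
pose chi t := 'D_u G (t *: v + (s *: u + a)).
have chi' (t : R) : is_derive t (1 : R) chi ('D_v ('D_u G) (t *: v + (s *: u + a))).
  exact: is_derive_line.
have [t t0h Et] := MVT0 h0 chi'.
exists s, t; split => //.
transitivity (psi h - psi 0).
  by rewrite /psi !scale0r !add0r addrA; lra.
rewrite Es (_ : _ - _ = chi h - chi 0); last by rewrite /chi scale0r add0r addrCA.
by rewrite Et addrCA addrA; ring.
Qed.

(* Both mixed derivatives are h^-2 times the same second difference, taken at
   intermediate points within h (|u| + |v|) of a. *)
Lemma mixed_derivatives_meet m (G : 'rV[R]_m -> R) u v a h : 0 < h ->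
  (forall x, differentiable G x) -> (forall x, differentiable ('D_u G) x) ->
  (forall x, differentiable ('D_v G) x) ->
  exists x y, [/\ `|x - a| <= h * (`|u| + `|v|), `|y - a| <= h * (`|u| + `|v|) &
                  'D_v ('D_u G) x = 'D_u ('D_v G) y].
Proof.
move=> h0 dG dGu dGv.
have near_a s t w w' : 0 <= s <= h -> 0 <= t <= h ->
    `|s *: w + t *: w' + a - a| <= h * (`|w| + `|w'|).
  move=> /andP[s0 sh] /andP[t0 th]; rewrite addrK.
  apply: (le_trans (ler_normD _ _)); rewrite !normrZ !ger0_norm // mulrDr.
  by apply: lerD; apply: ler_wpM2r.
have [s [t [s0h t0h Euv]]] := second_difference_mixed v a (ltW h0) dG dGu.
have [s' [t' [s0h' t0h' Evu]]] := second_difference_mixed u a (ltW h0) dG dGv.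
exists (s *: u + t *: v + a), (s' *: v + t' *: u + a); split.
- exact: near_a.
- by rewrite [`|u| + _]addrC; apply: near_a.
- have hh : h * h != 0 by rewrite mulf_neq0 // gt_eqF.
  apply: (mulfI hh (etrans (esym Euv) (etrans _ Evu))).
  by rewrite [h *: v + h *: u]addrC; congr (_ + _); apply: addrAC.
Qed.

Lemma schwarz m (G : 'rV[R]_m -> R) u v a :
  (forall x, differentiable G x) -> (forall x, differentiable ('D_u G) x) ->
  (forall x, differentiable ('D_v G) x) ->
  continuous ('D_v ('D_u G)) -> continuous ('D_u ('D_v G)) ->
  'D_v ('D_u G) a = 'D_u ('D_v G) a.
Proof.
move=> dG dGu dGv cA cB.
apply/eqP; rewrite -subr_eq0 -normr_le0; apply/ler_addgt0Pr => e e0; rewrite add0r.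
have e2 : 0 < e / 2 by rewrite divr_gt0.
have /nbhs_ballP[d /= d0 near_a] : \forall x \near a,
    `|'D_v ('D_u G) a - 'D_v ('D_u G) x| < e / 2 /\
    `|'D_u ('D_v G) a - 'D_u ('D_v G) x| < e / 2.
  exact: filterS2 _ (fun x => @conj _ _)
    ((cvgrPdist_lt _ _).1 (cA a) _ e2) ((cvgrPdist_lt _ _).1 (cB a) _ e2).
set N := `|u| + `|v|.
have N1 : 0 < N + 1 by rewrite ltr_pwDr // addr_ge0.
have h0 : 0 < d / (N + 1) by rewrite divr_gt0.
have hN : d / (N + 1) * N < d by rewrite mulrAC ltr_pdivrMr // ltr_pM2l // ltrDl.
have [x [y [xa ya Exy]]] := mixed_derivatives_meet a h0 dG dGu dGv.
have /near_a[Ax _] : ball a d x by rewrite -ball_normE /= distrC; apply: le_lt_trans xa hN.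
have /near_a[_ By] : ball a d y by rewrite -ball_normE /= distrC; apply: le_lt_trans ya hN.
rewrite (splitr e) -[_ - _](subrKA ('D_v ('D_u G) x)) {2}Exy.
rewrite distrC in By; exact: le_trans (ler_normD _ _) (ltW (ltrD Ax By)).
Qed.

Lemma smooth_derive_comm m (G : 'rV[R]_m -> R) u v a : smooth G ->
  'D_v ('D_u G) a = 'D_u ('D_v G) a.
Proof.
move=> sG; apply: schwarz => [x|x|x||].
- exact: smooth_differentiable.
- exact/smooth_differentiable/smooth_derive.
- exact/smooth_differentiable/smooth_derive.
- exact/smooth_continuous/smooth_derive/smooth_derive.
- exact/smooth_continuous/smooth_derive/smooth_derive.
Qed.

End Schwarz.

Lemma big_uniq_subset (R : nmodType) (T : eqType) (s t : seq T) (f : T -> R) :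
  uniq s -> uniq t -> {subset s <= t} -> {in t, forall x, x \notin s -> f x = 0} ->
  \sum_(x <- s) f x = \sum_(x <- t) f x.
Proof.
move=> us ut st f0.
rewrite [RHS](bigID (fun x => x \in s)) /= [X in _ + X]big1_seq ?addr0; last first.
  by move=> x /andP[xs xt]; apply: f0.
rewrite -[\sum_(i <- t | _) _]big_filter; apply: perm_big; apply: uniq_perm.
- exact: us.
- exact: filter_uniq.
- by move=> x; rewrite mem_filter andb_idr //; apply: st.
Qed.

Lemma big_uniq_support (R : nmodType) (T : eqType) (s t : seq T) (f : T -> R) :
  uniq s -> uniq t -> (forall x, x \notin s -> f x = 0) -> (forall x, x \notin t -> f x = 0) ->
  \sum_(x <- s) f x = \sum_(x <- t) f x.
Proof.
move=> us ut fs ft; have u_st : uniq (undup (s ++ t)) by apply: undup_uniq.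
rewrite (big_uniq_subset us u_st) ?(big_uniq_subset ut u_st) // => x.
- by rewrite mem_undup mem_cat => ->; rewrite orbT.
- by move=> _; apply: ft.
- by rewrite mem_undup mem_cat => ->.
- by move=> _; apply: fs.
Qed.

Section Partial.
Variables (R : realType) (p q : nat).
Implicit Types (F : jet R p q -> R) (z : jet R p q) (S : seq (coord p q)).

Definition coord_dir S (c : coord p q) : 'rV[R]_(size S) :=
  \row_k (tnth (in_tuple S) k == c)%:R.

Lemma restrict_shift S z c t :
  restrict S (shift_coord z c t) = t *: coord_dir S c + restrict S z.
Proof.
apply/rowP => k; rewrite !mxE /shift_coord.
by case: eqP => _; rewrite ?mulr1 ?mulr0 ?add0r // addrC.
Qed.

Lemma partial_restrict S (G : 'rV[R]_(size S) -> R) F c z :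
  F =1 G \o restrict S -> partial c F z = 'D_(coord_dir S c) G (restrict S z).
Proof.
move=> FG; rewrite /partial derive1E.
under eq_fun => t do rewrite FG /= restrict_shift.
by rewrite derive_line scale0r add0r.
Qed.

Lemma smooth_on_sub S S' F : {subset S <= S'} -> smooth_on S F -> smooth_on S' F.
Proof.
move=> sub [G [sG FG]].
have idx_lt (k : 'I_(size S)) : (index (tnth (in_tuple S) k) S' < size S')%N.
  by rewrite index_mem sub // mem_tnth.
pose f k : 'I_(size S') := Ordinal (idx_lt k).
exists (G \o colsub f); split => [k|z].
  exact: Ck_colsub.
rewrite FG /=; congr G; apply/rowP => k; rewrite !mxE.
by rewrite [tnth (in_tuple S') _](tnth_nth (tnth (in_tuple S) k)) /= nth_index // sub // mem_tnth.
Qed.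

Lemma inA_smooth_on2 F1 F2 : inA F1 -> inA F2 ->
  exists S (G1 G2 : 'rV[R]_(size S) -> R),
    [/\ smooth G1, smooth G2, F1 =1 G1 \o restrict S & F2 =1 G2 \o restrict S].
Proof.
move=> [S1 h1] [S2 h2].
have [G1 [s1 e1]] : smooth_on (S1 ++ S2) F1.
  by apply: smooth_on_sub h1 => c cS; rewrite mem_cat cS.
have [G2 [s2 e2]] : smooth_on (S1 ++ S2) F2.
  by apply: smooth_on_sub h2 => c cS; rewrite mem_cat cS orbT.
by exists (S1 ++ S2), G1, G2.
Qed.

Lemma eq_inA F1 F2 : F1 =1 F2 -> inA F1 -> inA F2.
Proof. by move=> /funext ->. Qed.

Lemma inA_cst (k : R) : inA (fun _ : jet R p q => k).
Proof. by exists [::], (fun _ => k); split => // n; apply: Ck_cst. Qed.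

Lemma inA_coord c : inA (fun z : jet R p q => z c).
Proof.
exists [:: c], (@row_coord R 1 ord0); split => [n|z]; first exact: Ck_row_coord.
by rewrite /row_coord mxE.
Qed.

Lemma inAD F1 F2 : inA F1 -> inA F2 -> inA (fun z => F1 z + F2 z).
Proof.
move=> h1 h2; have [S [G1 [G2 [s1 s2 e1 e2]]]] := inA_smooth_on2 h1 h2.
by exists S, (fun x => G1 x + G2 x); split => [n|z]; [apply: CkD | rewrite e1 e2].
Qed.

Lemma inAM F1 F2 : inA F1 -> inA F2 -> inA (fun z => F1 z * F2 z).
Proof.
move=> h1 h2; have [S [G1 [G2 [s1 s2 e1 e2]]]] := inA_smooth_on2 h1 h2.
by exists S, (fun x => G1 x * G2 x); split => [n|z]; [apply: CkM | rewrite e1 e2].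
Qed.

Lemma inAN F : inA F -> inA (fun z => - F z).
Proof. by move=> hF; apply: eq_inA (inAM (inA_cst (-1)) hF) => z; rewrite mulN1r. Qed.

Lemma inA_sum (I : Type) (s : seq I) (F : I -> jet R p q -> R) :
  (forall i, inA (F i)) -> inA (fun z => \sum_(i <- s) F i z).
Proof.
move=> hF; elim: s => [|a s IH]; first by apply: eq_inA (inA_cst 0) => z; rewrite big_nil.
by apply: eq_inA (inAD (hF a) IH) => z; rewrite big_cons.
Qed.

Lemma inA_partial c F : inA F -> inA (partial c F).
Proof.
move=> [S [G [sG FG]]]; exists S, ('D_(coord_dir S c) G); split; first exact: smooth_derive.
by move=> z; apply: partial_restrict.
Qed.

Lemma partialD F1 F2 c z : inA F1 -> inA F2 ->
  partial c (fun z => F1 z + F2 z) z = partial c F1 z + partial c F2 z.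
Proof.
move=> h1 h2; have [S [G1 [G2 [s1 s2 e1 e2]]]] := inA_smooth_on2 h1 h2.
rewrite (partial_restrict (G := G1 + G2)) => [|w]; last by rewrite /= e1 e2.
rewrite (partial_restrict _ _ e1) (partial_restrict _ _ e2) deriveD //;
  exact/diff_derivable/smooth_differentiable.
Qed.

Lemma partialM F1 F2 c z : inA F1 -> inA F2 ->
  partial c (fun z => F1 z * F2 z) z = F1 z * partial c F2 z + F2 z * partial c F1 z.
Proof.
move=> h1 h2; have [S [G1 [G2 [s1 s2 e1 e2]]]] := inA_smooth_on2 h1 h2.
rewrite (partial_restrict (G := G1 * G2)) => [|w]; last by rewrite /= e1 e2.
rewrite (partial_restrict _ _ e1) (partial_restrict _ _ e2) deriveM ?e1 ?e2 //;
  exact/diff_derivable/smooth_differentiable.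
Qed.

Lemma partial_coord c d z : partial c (fun z : jet R p q => z d) z = (d == c)%:R.
Proof.
rewrite (partial_restrict (S := [:: d]) (G := @row_coord R 1 ord0)) => [|w].
  by rewrite derive_row_coord mxE.
by rewrite /= /row_coord mxE.
Qed.

Lemma partial_comm F c d z : inA F -> partial c (partial d F) z = partial d (partial c F) z.
Proof.
move=> [S [G [sG FG]]].
rewrite (partial_restrict (G := 'D_(coord_dir S d) G)) => [|w]; last exact: partial_restrict.
rewrite (partial_restrict (G := 'D_(coord_dir S c) G)) => [|w]; last exact: partial_restrict.
exact: smooth_derive_comm.
Qed.

Lemma smooth_on_depends S F : smooth_on S F -> depends_on S F.
Proof.
move=> [G [_ FG]] z w E; rewrite !FG; congr G; apply/rowP => k; rewrite !mxE.
by apply: E; apply: mem_tnth.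
Qed.

Lemma depends_on_sub S S' F : {subset S <= S'} -> depends_on S F -> depends_on S' F.
Proof. by move=> sub dF z w E; apply: dF => c cS; apply/E/sub. Qed.

Lemma depends_on_op2 S F1 F2 (op : R -> R -> R) : depends_on S F1 -> depends_on S F2 ->
  depends_on S (fun z => op (F1 z) (F2 z)).
Proof. by move=> d1 d2 z w E; rewrite (d1 z w E) (d2 z w E). Qed.

Lemma depends_on_partial S F c : depends_on S F -> depends_on S (partial c F).
Proof.
move=> dF z w E; rewrite /partial; congr (derive1 _ 0); apply: funext => t.
by apply: dF => d dS; rewrite /shift_coord E.
Qed.

Lemma partial_notin S F c z : depends_on S F -> c \notin S -> partial c F z = 0.
Proof.
move=> dF cS; rewrite /partial (_ : (fun t => _) = fun=> F z) ?derive1_cst //.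
apply: funext => t; apply: dF => d dS; rewrite /shift_coord.
by case: eqP => // dc; rewrite -dc dS in cS.
Qed.

Lemma depends_on_supp F : inA F -> depends_on (supp F) F.
Proof.
move=> [S hS]; rewrite /supp; case: pselect => [h|[]]; first by case: (cid h).
by exists S; apply: smooth_on_depends.
Qed.

End Partial.

Section TotalDerivative.
Variables (R : realType) (p q : nat).
Implicit Types (F : jet R p q -> R) (z : jet R p q) (T : seq (coord p q)).

Definition succ_coord (i : 'I_p) (c : coord p q) : coord p q :=
  if c is inr jK then inr (jK.1, madd jK.2 (munit i)) else c.

Definition Dtot_coef (i : 'I_p) (c : coord p q) (z : jet R p q) : R :=
  if c is inl k then (k == i)%:R else z (succ_coord i c).

Lemma inA_Dtot_coef i c : inA (Dtot_coef i c).
Proof. by case: c => [k|jK]; [apply: inA_cst | apply: inA_coord]. Qed.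

Lemma DtotE i F T z : inA F -> depends_on T F -> uniq T ->
  Dtot i F z = \sum_(c <- T) Dtot_coef i c z * partial c F z.
Proof.
move=> hF dT uT; set S := undup (inl i :: supp F).
have uS : uniq S by apply: undup_uniq.
have dS : depends_on S F.
  by apply: depends_on_sub (depends_on_supp hF) => c cF; rewrite mem_undup inE cF orbT.
have -> : \sum_(c <- T) Dtot_coef i c z * partial c F z =
          \sum_(c <- S) Dtot_coef i c z * partial c F z.
  by apply: big_uniq_support => // c c_out; rewrite (partial_notin _ _ c_out) ?mulr0.
pose g c := if c is inr jK
  then z (inr (jK.1, madd jK.2 (munit i))) * partial c F z else 0.
transitivity (\sum_(c <- S) ((inl i == c)%:R * partial c F z + g c)); last first.
  by apply: eq_bigr => -[k|jK] _ /=; rewrite ?mul0r ?add0r // addr0 eq_sym.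
rewrite big_split /= /Dtot; congr (_ + _).
  rewrite (big_uniq_support (s := S) (t := [:: inl i])) ?big_seq1 ?eqxx ?mul1r //.
    move=> c; rewrite mem_undup inE negb_or eq_sym => /andP[/negPf -> _].
    by rewrite mul0r.
  by move=> c; rewrite inE eq_sym => /negPf ->; rewrite mul0r.
apply: big_uniq_support; rewrite ?undup_uniq // => -[k|jK] //= cS.
  by rewrite (partial_notin _ (depends_on_supp hF)) ?mulr0 // -mem_undup.
by rewrite (partial_notin _ dS cS) mulr0.
Qed.

Lemma inA_depends F : inA F -> exists T, depends_on T F /\ uniq T.
Proof.
move=> hF; exists (undup (supp F)); split; last exact: undup_uniq.
by apply: depends_on_sub (depends_on_supp hF) => c; rewrite mem_undup.
Qed.

Lemma inA_depends2 F1 F2 : inA F1 -> inA F2 ->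
  exists T, [/\ depends_on T F1, depends_on T F2 & uniq T].
Proof.
move=> h1 h2; exists (undup (supp F1 ++ supp F2)); split; last exact: undup_uniq.
  by apply: depends_on_sub (depends_on_supp h1) => c cF; rewrite mem_undup mem_cat cF.
by apply: depends_on_sub (depends_on_supp h2) => c cF; rewrite mem_undup mem_cat cF orbT.
Qed.

Lemma inA_Dtot i F : inA F -> inA (Dtot i F).
Proof.
move=> hF; have [T [dT uT]] := inA_depends hF.
apply: eq_inA (inA_sum T (fun c => inAM (inA_Dtot_coef i c) (inA_partial c hF))) => z.
by rewrite (DtotE _ _ hF dT uT).
Qed.

Lemma Dtot_coord i c z : Dtot i (fun w => w c) z = Dtot_coef i c z.
Proof.
rewrite (@DtotE i _ [:: c]) ?big_seq1 ?partial_coord ?eqxx ?mulr1 //; first exact: inA_coord.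
by move=> w w' /(_ c (mem_head _ _)).
Qed.

Lemma Dtot_cst i (k : R) z : Dtot i (fun _ : jet R p q => k) z = 0.
Proof. by rewrite (@DtotE i _ [::]) ?big_nil //; apply: inA_cst. Qed.

Lemma DtotD i F1 F2 z : inA F1 -> inA F2 ->
  Dtot i (fun z => F1 z + F2 z) z = Dtot i F1 z + Dtot i F2 z.
Proof.
move=> h1 h2; have [T [d1 d2 uT]] := inA_depends2 h1 h2.
rewrite (DtotE _ _ (inAD h1 h2) (depends_on_op2 +%R d1 d2) uT).
rewrite (DtotE _ _ h1 d1 uT) (DtotE _ _ h2 d2 uT) -big_split.
by apply: eq_bigr => c _; rewrite partialD // mulrDr.
Qed.

Lemma DtotM i F1 F2 z : inA F1 -> inA F2 ->
  Dtot i (fun z => F1 z * F2 z) z = F1 z * Dtot i F2 z + F2 z * Dtot i F1 z.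
Proof.
move=> h1 h2; have [T [d1 d2 uT]] := inA_depends2 h1 h2.
rewrite (DtotE _ _ (inAM h1 h2) (depends_on_op2 *%R d1 d2) uT).
rewrite (DtotE _ _ h1 d1 uT) (DtotE _ _ h2 d2 uT).
rewrite !big_distrr -big_split; apply: eq_bigr => c _.
by rewrite partialM // mulrDr; congr (_ + _); rewrite mulrCA.
Qed.

Lemma DtotN i F z : inA F -> Dtot i (fun z => - F z) z = - Dtot i F z.
Proof.
move=> hF; under eq_fun => w do rewrite -mulN1r.
by rewrite DtotM ?Dtot_cst ?mulr0 ?addr0 ?mulN1r //; apply: inA_cst.
Qed.

Lemma DtotB i F1 F2 z : inA F1 -> inA F2 ->
  Dtot i (fun z => F1 z - F2 z) z = Dtot i F1 z - Dtot i F2 z.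
Proof. by move=> h1 h2; rewrite DtotD ?DtotN //; apply: inAN. Qed.

Lemma Dtot_sum i (I : Type) (s : seq I) (F : I -> jet R p q -> R) z :
  (forall k, inA (F k)) ->
  Dtot i (fun z => \sum_(k <- s) F k z) z = \sum_(k <- s) Dtot i (F k) z.
Proof.
move=> hF; elim: s => [|a s IH].
  by under eq_fun => w do rewrite big_nil; rewrite Dtot_cst big_nil.
under eq_fun => w do rewrite big_cons.
by rewrite DtotD ?IH ?big_cons //; apply: inA_sum.
Qed.

Lemma Dtot_DtotE i j F T z : inA F -> depends_on T F -> uniq T ->
  Dtot i (Dtot j F) z = \sum_(d <- T)
    (Dtot_coef j d z * \sum_(c <- T) Dtot_coef i c z * partial c (partial d F) z +
     partial d F z * Dtot i (Dtot_coef j d) z).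
Proof.
move=> hF dT uT.
rewrite (_ : Dtot j F = fun w => \sum_(d <- T) Dtot_coef j d w * partial d F w); last first.
  by apply: funext => w; apply: DtotE.
rewrite Dtot_sum => [|d]; last exact: inAM (inA_Dtot_coef j d) (inA_partial d hF).
apply: eq_bigr => d _; have hdF := inA_partial d hF.
by rewrite DtotM ?(DtotE _ _ hdF (depends_on_partial d dT) uT) //; apply: inA_Dtot_coef.
Qed.

Lemma Dtot_coef_comm i j d z :
  Dtot i (Dtot_coef j d) z = Dtot j (Dtot_coef i d) z.
Proof.
case: d => [k|[l K]]; first by rewrite !Dtot_cst.
rewrite !Dtot_coord /= (_ : madd (madd K _) _ = madd (madd K (munit j)) (munit i)) //.
by apply/ffunP => t; rewrite !ffunE addnAC.
Qed.

Lemma Dtot_comm i j F : inA F -> Dtot i (Dtot j F) = Dtot j (Dtot i F).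
Proof.
move=> hF; apply: funext => z; have [T [dT uT]] := inA_depends hF.
rewrite !(Dtot_DtotE _ _ _ hF dT uT) !big_split /=; congr (_ + _); last first.
  by apply: eq_bigr => d _; rewrite Dtot_coef_comm.
under eq_bigr => d _ do rewrite big_distrr.
under [RHS]eq_bigr => d _ do rewrite big_distrr.
rewrite exchange_big; apply: eq_bigr => c _; apply: eq_bigr => d _ /=.
by rewrite partial_comm // mulrCA.
Qed.

End TotalDerivative.

Section MultiDerivative.
Variables (R : realType) (p q : nat).
Implicit Types (F : jet R p q -> R) (K L : mindex p).

Definition Dseq (s : seq 'I_p) F : jet R p q -> R := foldr (@Dtot R p q) F s.

Definition mindex_seq K (s : seq 'I_p) := flatten [seq nseq (K i) i | i <- s].

Lemma inA_Dseq s F : inA F -> inA (Dseq s F).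
Proof. by move=> hF; elim: s => [|i s IH] //=; apply: inA_Dtot. Qed.

Lemma Dseq_cat s t F : Dseq (s ++ t) F = Dseq s (Dseq t F).
Proof. exact: foldr_cat. Qed.

Lemma Dseq_rem i s F : inA F -> i \in s -> Dseq s F = Dtot i (Dseq (rem i s) F).
Proof.
move=> hF; elim: s => [//|j s IH] /=.
have [-> _|ji] := eqVneq j i; first by rewrite /= ?eqxx.
rewrite inE eq_sym (negPf ji) /= => i_s.
by rewrite IH // Dtot_comm //; apply: inA_Dseq.
Qed.

Lemma Dseq_perm s t F : inA F -> perm_eq s t -> Dseq s F = Dseq t F.
Proof.
move=> hF; elim: s t => [|i s IH] t st; first by move: st; rewrite perm_sym => /perm_nilP ->.
have it : i \in t by rewrite -(perm_mem st) mem_head.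
rewrite (Dseq_rem hF it) /= (IH (rem i t)) //.
by rewrite -(perm_cons i) (perm_trans st) // perm_to_rem.
Qed.

Lemma DK_Dseq K F : DK K F = Dseq (mindex_seq K (enum 'I_p)) F.
Proof.
rewrite /DK /mindex_seq; elim: (enum 'I_p) => [|i s IH] //=.
rewrite Dseq_cat -IH; elim: (K i) => [|k IHk] //=.
by rewrite IHk.
Qed.

Lemma perm_mindex_seq_madd K L s :
  perm_eq (mindex_seq (madd K L) s) (mindex_seq K s ++ mindex_seq L s).
Proof.
apply/permP => P; rewrite count_cat /mindex_seq.
elim: s => [|i s IH] //=; rewrite !count_cat IH ffunE nseqD count_cat.
by rewrite addnACA.
Qed.

Lemma inA_DK K F : inA F -> inA (DK K F).
Proof. by move=> hF; rewrite DK_Dseq; apply: inA_Dseq. Qed.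

Lemma DK_madd K L F : inA F -> DK (madd K L) F = DK K (DK L F).
Proof. by move=> hF; rewrite !DK_Dseq -Dseq_cat; apply/Dseq_perm/perm_mindex_seq_madd. Qed.

Lemma DK_munit i F : inA F -> DK (munit i) F = Dtot i F.
Proof.
move=> hF; rewrite DK_Dseq (Dseq_perm (t := [:: i])) //.
apply/permP => P; rewrite /mindex_seq /=.
have -> : count P (flatten [seq nseq (munit i j) j | j <- enum 'I_p]) =
          (\sum_(j <- enum 'I_p) P j * (j == i))%N.
  by elim: (enum 'I_p) => [|j s IH] /=; rewrite ?big_nil // count_cat IH big_cons ffunE count_nseq.
rewrite (bigD1_seq i) ?mem_enum ?enum_uniq //= eqxx muln1 big1 ?addn0 //.
by move=> j /negPf ->; rewrite muln0.
Qed.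

Lemma DKB K F1 F2 z : inA F1 -> inA F2 ->
  DK K (fun z => F1 z - F2 z) z = DK K F1 z - DK K F2 z.
Proof.
move=> h1 h2; rewrite !DK_Dseq; elim: (mindex_seq K _) z => [//|i s IH] z /=.
rewrite (_ : Dseq s _ = fun z => Dseq s F1 z - Dseq s F2 z); last exact: funext.
by rewrite DtotB //; apply: inA_Dseq.
Qed.

End MultiDerivative.

Section DifferentialIdeal.
Variables (R : realType) (p q n : nat) (ia : 'I_n -> 'I_q) (Ja : 'I_n -> mindex p)
          (P : 'I_n -> jet R p q -> R).
Hypothesis inA_P : forall a, inA (P a).
Implicit Types (Q : jet R p q -> R).

Local Notation in_ideal := (in_ideal ia Ja P).
Local Notation Delta := (Delta ia Ja P).

Lemma inA_Delta a : inA (Delta a).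
Proof. by apply: inAD; [apply: inA_coord | apply: inAN]. Qed.

Lemma eq_in_ideal Q1 Q2 : Q1 =1 Q2 -> in_ideal Q1 -> in_ideal Q2.
Proof. by move=> /funext ->. Qed.

Lemma in_ideal0 : in_ideal (fun _ => 0).
Proof.
have al : 'I_0 -> 'I_n by case.
by exists 0%N, (fun _ _ => 0), al, (fun _ => 0); split => [[]|z]; rewrite ?big_ord0.
Qed.

Lemma in_idealD Q1 Q2 : in_ideal Q1 -> in_ideal Q2 -> in_ideal (fun z => Q1 z + Q2 z).
Proof.
move=> [m1 [c1 [al1 [L1 [h1 e1]]]]] [m2 [c2 [al2 [L2 [h2 e2]]]]].
pose glue T (f1 : 'I_m1 -> T) (f2 : 'I_m2 -> T) (k : 'I_(m1 + m2)) :=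
  match fintype.split k with inl k1 => f1 k1 | inr k2 => f2 k2 end.
exists (m1 + m2)%N, (glue _ c1 c2), (glue _ al1 al2), (glue _ L1 L2).
split => [k|z]; first by rewrite /glue; case: fintype.split.
rewrite big_split_ord e1 e2 /glue; congr (_ + _); apply: eq_bigr => k _.
  by rewrite (unsplitK (inl k : 'I_m1 + 'I_m2)).
by rewrite (unsplitK (inr k : 'I_m1 + 'I_m2)).
Qed.

Lemma in_idealMl f Q : inA f -> in_ideal Q -> in_ideal (fun z => f z * Q z).
Proof.
move=> hf [m [c [al [L [h e]]]]].
exists m, (fun k z => f z * c k z), al, L; split => [k|z]; first exact: inAM.
by rewrite e big_distrr; apply: eq_bigr => k _; exact: mulrA.
Qed.

Lemma in_ideal_DK_Delta L a : in_ideal (DK L (Delta a)).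
Proof.
exists 1%N, (fun _ _ => 1), (fun _ => a), (fun _ => L); split => [k|z].
  exact: inA_cst.
by rewrite big_ord1 mul1r.
Qed.

Lemma in_ideal_sum m (Q : 'I_m -> jet R p q -> R) :
  (forall k, in_ideal (Q k)) -> in_ideal (fun z => \sum_(k < m) Q k z).
Proof.
move=> hQ; elim: (index_enum 'I_m) => [|k s IH].
  by apply: eq_in_ideal in_ideal0 => z; rewrite big_nil.
by apply: eq_in_ideal (in_idealD (hQ k) IH) => z; rewrite big_cons.
Qed.

Lemma in_ideal_Dtot i Q : in_ideal Q -> in_ideal (Dtot i Q).
Proof.
move=> [m [c [al [L [h e]]]]].
have hD k : inA (DK (L k) (Delta (al k))) by apply/inA_DK/inA_Delta.
apply: (@eq_in_ideal (fun z => \sum_(k < m)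
   (c k z * DK (madd (munit i) (L k)) (Delta (al k)) z +
    Dtot i (c k) z * DK (L k) (Delta (al k)) z))).
  move=> z; rewrite (_ : Q = fun z => \sum_(k < m) c k z * DK (L k) (Delta (al k)) z).
    rewrite Dtot_sum => [|k]; last exact: inAM.
    apply: eq_bigr => k _; rewrite DtotM // DK_madd ?DK_munit //; last exact: inA_Delta.
    by rewrite [_ * Dtot i (c k) z]mulrC.
  exact: funext.
apply: in_ideal_sum => k; apply: in_idealD; apply: in_idealMl (in_ideal_DK_Delta _ _) => //.
exact: inA_Dtot.
Qed.

Lemma in_ideal_DK K Q : in_ideal Q -> in_ideal (DK K Q).
Proof.
move=> hQ; rewrite DK_Dseq; elim: (mindex_seq K _) => [//|i s IH] /=.
exact: in_ideal_Dtot.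
Qed.

End DifferentialIdeal.

Section ReducedForms.
Variables (R : realType) (p q n : nat) (ia : 'I_n -> 'I_q) (Ja : 'I_n -> mindex p)
          (P : 'I_n -> jet R p q -> R).
Implicit Types (F Q : jet R p q -> R).

Lemma inB_inA F : inB ia Ja F -> inA F.
Proof. by case=> S [_ hS]; exists S. Qed.

Lemma reduced_form_unique Q R1 R2 : unique_reduced_forms ia Ja P -> inA Q ->
  reduced_form ia Ja P Q R1 -> reduced_form ia Ja P Q R2 -> R1 = R2.
Proof.
move=> uniqR hQ r1 r2; have [Rf [_ RfE]] := uniqR Q hQ.
by rewrite (RfE _ r1) (RfE _ r2).
Qed.

Hypothesis inA_P : forall a, inA (P a).

Lemma reduced_form_DK K Q Rq R' : inA Q ->
  reduced_form ia Ja P Q Rq -> reduced_form ia Ja P (DK K Rq) R' ->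
  reduced_form ia Ja P (DK K Q) R'.
Proof.
move=> hQ [hRq IQ] [hR' IR']; split=> //.
apply: (eq_in_ideal (Q1 := fun z => DK K (fun z => Q z - Rq z) z + (DK K Rq z - R' z))).
  by move=> z; rewrite DKB ?addrA ?subrK //; apply: inB_inA.
exact: in_idealD (in_ideal_DK inA_P K IQ) IR'.
Qed.

End ReducedForms.

Theorem proposition1 (R : realType) (p q n : nat)
  (ia : 'I_n -> 'I_q) (Ja : 'I_n -> mindex p) (P : 'I_n -> jet R p q -> R)
  (rk : rel ('I_q * mindex p)) :
  passive_orthonomic ia Ja P rk ->
  unique_reduced_forms ia Ja P ->
  forall (K L : mindex p) (F : jet R p q -> R), inB ia Ja F ->
  forall R1 R2 R3 : jet R p q -> R,
    reduced_form ia Ja P (DK L F) R1 ->            (* R1 = frakD_L F *)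
    reduced_form ia Ja P (DK K R1) R2 ->           (* R2 = frakD_K (frakD_L F) *)
    reduced_form ia Ja P (DK (madd K L) F) R3 ->   (* R3 = frakD_(K+L) F *)
    R2 = R3.
Proof.
move=> [_ _ smooth_P _] uniqR K L F /inB_inA hF R1 R2 R3 r1 r2 r3.
have inA_P a : inA (P a) by have [S [_ hS]] := smooth_P a; exists S.
apply: (reduced_form_unique uniqR (inA_DK (madd K L) hF)) r3.
by rewrite DK_madd //; exact: (reduced_form_DK inA_P (inA_DK L hF) r1 r2).
Qed.
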